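(* Let $u^1,\dots,u^M$ be coherent utilities on $L^0$ with determining sets $\mathcal{D}^1,\dots,\mathcal{D}^M$, and $\rho^m=-u^m$. Let $X=(X^1,\dots,X^d)$ with $X^i\in\bigcap_mL^1_w(\mathcal{D}^m)$, and assume $u^m(\langle h,X\rangle)<0$ for all $h\in\mathbb{R}^d\setminus\{0\}$ and all $m$. Let $E\in\mathbb{R}^d\setminus\{0\}$ and $c^1,\dots,c^M\in(0,\infty)$. Set $G^m=\mathrm{cl}\{\mathsf{E}_\mathsf{Q}X:\mathsf{Q}\in\mathcal{D}^m\}\subseteq\mathbb{R}^d$ and $G=\mathrm{conv}\{G^m/c^m:m=1,\dots,M\}$ (a convex compact set containing $0$ in its interior). Let $T$ be the point of the boundary of $G$ on the ray $\{-tE:t>0\}$, and let $N$ be the set of inner normals to $G$ at $T$, i.e. $N=\{h\in\mathbb{R}^d:\langle h,x\rangle\ge\langle h,T\rangle\ \forall x\in G\}$. Then the set of solutions of the problem $$\langle h,E\rangle\to\max\quad\text{over }h\in\mathbb{R}^d\text{ subject to }\rho^m(\langle h,X\rangle)\le c^m,\ m=1,\dots,M,$$ is $\{h\in N:\langle h,T\rangle=-1\}$, and the maximal value of $\langle h,E\rangle$ is $|E|/|T|$.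
   Context: Let $(\Omega,\mathcal{F},\mathsf{P})$ be a probability space, $L^0$ the space of all real random variables, and $\mathcal{P}$ the set of probability measures on $\mathcal{F}$ absolutely continuous with respect to $\mathsf{P}$. For $\mathsf{Q}\in\mathcal{P}$ and $X\in L^0$, $\mathsf{E}_\mathsf{Q}X:=\mathsf{E}_\mathsf{Q}X^+-\mathsf{E}_\mathsf{Q}X^-$ with the convention $\infty-\infty=-\infty$ (for a vector $X$, $\mathsf{E}_\mathsf{Q}X$ is taken componentwise). A coherent utility on $L^0$ is a map $u:L^0\to[-\infty,\infty]$ of the form $u(X)=\inf_{\mathsf{Q}\in\mathcal{D}}\mathsf{E}_\mathsf{Q}X$ for a nonempty $\mathcal{D}\subseteq\mathcal{P}$; its determining set is the largest such set, $\{\mathsf{Q}\in\mathcal{P}:\mathsf{E}_\mathsf{Q}X\ge u(X)\ \forall X\in L^0\}$. For a coherent utility $u$ with determining set $\mathcal{D}$, $L^1_w(\mathcal{D})=\{X\in L^0:u(X)>-\infty,\ u(-X)>-\infty\}$. $\mathrm{cl}$ denotes closure and $\mathrm{conv}$ convex hull. *)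

From HB Require Import structures.
From mathcomp Require Import all_boot all_order all_algebra.
From mathcomp Require Import all_classical all_reals all_analysis.
Set Implicit Arguments. Unset Strict Implicit. Unset Printing Implicit Defensive.
Import Order.TTheory GRing.Theory Num.Theory.
Import numFieldNormedType.Exports.
Local Open Scope classical_set_scope.
Local Open Scope ring_scope.

Section Defs.
Context {dT : measure_display} {T : measurableType dT} {R : realType}.

Definition L0 (X : T -> R) : Prop := measurable_fun setT X.

Definition abs_cont (Q P : probability T R) : Prop :=
  forall A, measurable A -> P A = 0%E -> Q A = 0%E.

(* E_Q X := E_Q X^+ - E_Q X^-, with the convention oo - oo = -oo
   (this is the convention of MathComp's extended-real addition). *)
Definition EQ (Q : probability T R) (X : T -> R) : \bar R :=
  ((\int[Q]_x (Num.max (X x) 0)%:E) - (\int[Q]_x (Num.max (- X x) 0)%:E))%E.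

Definition coherent_utility (P : probability T R) (u : (T -> R) -> \bar R) : Prop :=
  exists D : set (probability T R),
    D !=set0 /\ (forall Q, D Q -> abs_cont Q P) /\
    forall X, L0 X -> u X = ereal_inf [set EQ Q X | Q in D].

Definition determining_set (P : probability T R) (u : (T -> R) -> \bar R)
  : set (probability T R) :=
  [set Q | abs_cont Q P /\ forall X, L0 X -> (u X <= EQ Q X)%E].

Definition L1w (u : (T -> R) -> \bar R) : set (T -> R) :=
  [set X | L0 X /\ (-oo < u X)%E /\ (-oo < u (fun w => (- X w)%R))%E].

End Defs.

Definition dotv {R : realType} {d : nat} (x y : 'rV[R]_d) : R :=
  \sum_(i < d) x ord0 i * y ord0 i.
Definition enorm {R : realType} {d : nat} (x : 'rV[R]_d) : R :=
  Num.sqrt (dotv x x).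

Definition pairRV {T : Type} {R : realType} {d : nat}
  (h : 'rV[R]_d) (X : 'I_d -> T -> R) : T -> R :=
  fun w => \sum_(i < d) h ord0 i * X i w.

(* E_Q X for a vector X, as a point of R^d (components are finite on
   the relevant sets) *)
Definition EQv {dT : measure_display} {T : measurableType dT} {R : realType} {d : nat}
  (Q : probability T R) (X : 'I_d -> T -> R) : 'rV[R]_d :=
  \row_(i < d) fine (EQ Q (X i)).

Definition convex_setv {R : realType} {d : nat} (C : set 'rV[R]_d) : Prop :=
  forall x y (t : R), C x -> C y -> 0 <= t -> t <= 1 -> C (t *: x + (1 - t) *: y).
Definition convhull {R : realType} {d : nat} (A : set 'rV[R]_d) : set 'rV[R]_d :=
  \bigcap_(C in [set C | convex_setv C /\ A `<=` C]) C.

(* By the representation of a coherent utility through its determining set,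
   [h] satisfies the m-th constraint iff [<h, E_Q X> >= - c^m] for every [Q] in [D^m], so the
   feasible set is the polar [{h | <h, x> >= -1 on G}] of [G]; taking closures and convex hulls
   does not change polars.  Since [T = - t E] with [t > 0], maximising [<h, E>] over the polar
   means pushing [<h, T>] down to its lower bound [-1] on the closure of [G].  The bound is
   attained because [T] is not interior to [G]: the hypothesis [u^m(<h, X>) < 0] and the
   compactness of the unit sphere put a ball around [0] inside the convex hull of finitely many
   points of [G], so the polar is compact; if the minimum of [<h, T>] over it were [> -1], a
   compactness argument and the separation of a point from a polytope would place some dilate
   [s T], [s > 1], inside [G], making [T] interior. *)

From HB Require Import structures.
From mathcomp Require Import all_boot all_order all_algebra.
From mathcomp Require Import all_classical all_reals all_analysis.
From mathcomp Require Import measurable_realfun.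
From mathcomp.algebra_tactics Require Import ring lra.
Set Implicit Arguments. Unset Strict Implicit. Unset Printing Implicit Defensive.
Import Order.TTheory GRing.Theory Num.Theory.
Import numFieldNormedType.Exports.
Local Open Scope classical_set_scope.
Local Open Scope ring_scope.

Section InnerProduct.
Variables (R : realType) (d : nat).
Implicit Types (x y z h : 'rV[R]_d).

Lemma dotvC x y : dotv x y = dotv y x.
Proof. by apply: eq_bigr => i _; rewrite mulrC. Qed.

Lemma dotvDr x y z : dotv x (y + z) = dotv x y + dotv x z.
Proof. by rewrite /dotv -big_split; apply: eq_bigr => i _; rewrite mxE mulrDr. Qed.

Lemma dotvZr (a : R) x y : dotv x (a *: y) = a * dotv x y.
Proof. by rewrite /dotv mulr_sumr; apply: eq_bigr => i _; rewrite mxE mulrCA. Qed.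

Lemma dotvDl x y z : dotv (x + y) z = dotv x z + dotv y z.
Proof. by rewrite dotvC dotvDr !(dotvC z). Qed.

Lemma dotvZl (a : R) x y : dotv (a *: x) y = a * dotv x y.
Proof. by rewrite dotvC dotvZr dotvC. Qed.

Lemma dotvNr x y : dotv x (- y) = - dotv x y.
Proof. by rewrite -scaleN1r dotvZr mulN1r. Qed.

Lemma dotvBr x y z : dotv x (y - z) = dotv x y - dotv x z.
Proof. by rewrite dotvDr dotvNr. Qed.

Lemma dotv0r x : dotv x 0 = 0.
Proof. by rewrite -(scale0r 0) dotvZr mul0r. Qed.

Lemma dotv0l x : dotv 0 x = 0.
Proof. by rewrite dotvC dotv0r. Qed.

Lemma dotv_expand x y (t : R) :
  dotv (x + t *: y) (x + t *: y) = dotv x x + t * (2 * dotv x y + t * dotv y y).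
Proof. by rewrite !(dotvDl, dotvDr, dotvZl, dotvZr) (dotvC y x); ring. Qed.

Lemma dotvv_ge0 x : 0 <= dotv x x.
Proof. by rewrite sumr_ge0 // => i _; rewrite -expr2 sqr_ge0. Qed.

Lemma sqr_norm_le_dotvv x : `|x| ^+ 2 <= dotv x x.
Proof.
have -> : `|x| = mx_norm x by [].
have [->|/mx_norm_neq0 [[i j] /= ->]] := eqVneq (mx_norm x) 0.
  by rewrite expr0n dotvv_ge0.
rewrite /dotv (bigD1 j) //= ord1 real_normK ?num_real // -expr2 lerDl.
by rewrite sumr_ge0 // => k _; rewrite -expr2 sqr_ge0.
Qed.

Lemma dotvv_gt0 x : x != 0 -> 0 < dotv x x.
Proof.
by move=> x0; apply: lt_le_trans (sqr_norm_le_dotvv x); rewrite exprn_gt0 ?normr_gt0.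
Qed.

Lemma normr_coord_le x i : `|x ord0 i| <= `|x|.
Proof.
have -> : `|x| = mx_norm x by [].
rewrite mx_normrE.
exact: (le_bigmax 0 (fun ij : 'I_1 * 'I_d => `|x ij.1 ij.2|) (ord0, i)).
Qed.

(* [`|x|] is the max norm of matrices, whence the factor [d]. *)
Lemma normr_dotv_le x y : `|dotv x y| <= d%:R * `|x| * `|y|.
Proof.
apply: le_trans (ler_norm_sum _ _ _) _.
have -> : d%:R * `|x| * `|y| = \sum_(i < d) `|x| * `|y|.
  by rewrite sumr_const card_ord -mulrA mulr_natl.
apply: ler_sum => i _.
by rewrite normrM ler_pM ?normr_coord_le.
Qed.

Lemma dotv_continuous {T : topologicalType} (f g : T -> 'rV[R]_d) :
  continuous f -> continuous g -> continuous (fun t => dotv (f t) (g t)).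
Proof.
move=> cf cg; apply: (continuous_big (P := xpredT)); first exact: add_continuous.
move=> i _ t; apply: (@continuousM R T (fun t => f t ord0 i) (fun t => g t ord0 i)).
  exact: continuous_comp (cf t) (@coord_continuous R 1 d ord0 i (f t)).
exact: continuous_comp (cg t) (@coord_continuous R 1 d ord0 i (g t)).
Qed.

Lemma dotv_continuousr x : continuous (dotv x).
Proof.
by apply: (@dotv_continuous _ (cst x) id) => t; [exact: cst_continuous|exact: cvg_id].
Qed.

Lemma dotv_continuousl x : continuous (dotv^~ x).
Proof.
rewrite (_ : dotv^~ x = dotv x) ?funeqE => [|y]; [exact: dotv_continuousr|exact: dotvC].
Qed.

Lemma closed_halfspace h (b : R) : closed [set x | b <= dotv h x].
Proof.
apply: (@preimage_closed _ _ (dotv h) [set r | b <= r]); last exact: closed_ge.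
by move=> x _; exact: dotv_continuousr.
Qed.

Lemma convex_halfspace h (b : R) : convex_setv [set x | b <= dotv h x].
Proof.
move=> x y t /= bx b_y t0 t1; rewrite dotvDr !dotvZr.
rewrite -[leLHS]mul1r -[1 in leLHS](subrK t) mulrDl addrC.
by rewrite lerD // ler_wpM2l // subr_ge0.
Qed.

End InnerProduct.

Section ConvexPolar.
Variables (R : realType) (d : nat).
Implicit Types (A C : set 'rV[R]_d) (h x : 'rV[R]_d).

Lemma convex_convhull A : convex_setv (convhull A).
Proof. by move=> x y t Ax Ay t0 t1 C CA; exact: CA.1 _ _ _ (Ax C CA) (Ay C CA) t0 t1. Qed.

Lemma subset_convhull A : A `<=` convhull A.
Proof. exact: sub_smallest. Qed.

Lemma convhull_sub A C : convex_setv C -> A `<=` C -> convhull A `<=` C.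
Proof. exact: smallest_sub. Qed.

Lemma convhull_neq0 A : convhull A !=set0 -> A !=set0.
Proof.
move=> [x Ax]; apply/set0P/negP => /eqP A0.
have set0_convex : convex_setv (@set0 'rV[R]_d) by move=> ? ? ? [].
have A_sub0 : A `<=` set0 by rewrite A0.
by have [] := convhull_sub set0_convex A_sub0 Ax.
Qed.

Lemma convex_setv_comb C n (w : 'I_n -> R) (a : 'I_n -> 'rV[R]_d) :
  convex_setv C -> (forall j, 0 <= w j) -> \sum_j w j = 1 -> (forall j, C (a j)) ->
  C (\sum_j w j *: a j).
Proof.
move=> Cc; elim: n w a => [|n IHn] w a w_ge0 w1 Ca.
  by move: w1; rewrite big_ord0 => /esym/eqP; rewrite oner_eq0.
move: w1; rewrite !big_ord_recl => w1.
have rest_ge0 : 0 <= \sum_(j < n) w (lift ord0 j) by rewrite sumr_ge0.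
have [w0_1|w0_neq1] := eqVneq (w ord0) 1.
  have /eqP : \sum_(j < n) w (lift ord0 j) = 0.
    by apply: (addrI (w ord0)); rewrite w1 w0_1 addr0.
  rewrite psumr_eq0 // => /allP rest0.
  rewrite big1 ?addr0 ?w0_1 ?scale1r // => j _.
  by rewrite (eqP (implyP (rest0 j (mem_index_enum _)) isT)) scale0r.
have w0_lt1 : w ord0 < 1 by rewrite lt_neqAle w0_neq1 -w1 lerDl.
set s := 1 - w ord0; have s_gt0 : 0 < s by rewrite subr_gt0.
have rest_s : \sum_(j < n) w (lift ord0 j) = s by rewrite /s -w1 addrC addKr.
have Crest : C (\sum_(j < n) (w (lift ord0 j) / s) *: a (lift ord0 j)).
  apply: IHn => // [j|]; first by rewrite divr_ge0 ?w_ge0 ?ltW.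
  by rewrite -mulr_suml rest_s divff // gt_eqF.
have := Cc _ _ (w ord0) (Ca ord0) Crest (w_ge0 _) (ltW w0_lt1).
congr C; rewrite scaler_sumr; congr (_ + _); apply: eq_bigr => j _.
by rewrite scalerA mulrCA divff ?mulr1 // gt_eqF.
Qed.

(* The reflection [- A°] of the usual polar [A° = {h | <h, a> <= 1 on A}]. *)
Definition polar A : set 'rV[R]_d := [set h | forall a, A a -> -1 <= dotv h a].

Lemma polarS A C : A `<=` C -> polar C `<=` polar A.
Proof. by move=> AC h hC a /AC; exact: hC. Qed.

Lemma closed_polar A : closed (polar A).
Proof.
rewrite (_ : polar A = \bigcap_(a in A) [set h | -1 <= dotv h a]).
  apply: closed_bigI => a _.
  apply: (@preimage_closed _ _ (dotv^~ a) [set r | -1 <= r]); last exact: closed_ge.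
  by move=> h _; exact: dotv_continuousl.
by apply/seteqP; split=> h hA a Aa; exact: hA.
Qed.

Lemma polar_closure A : polar (closure A) = polar A.
Proof.
apply/seteqP; split; first exact/polarS/subset_closure.
move=> h hA; rewrite closureE; apply: smallest_sub; first exact: closed_halfspace.
exact: hA.
Qed.

Lemma polar_convhull A : polar (convhull A) = polar A.
Proof.
apply/seteqP; split; first by apply: polarS; exact: subset_convhull.
move=> h hA a; apply: (convhull_sub (C := [set x | -1 <= dotv h x])).
  exact: convex_halfspace.
exact: hA.
Qed.

Lemma polar_bigcup (I : Type) (D : set I) (F : I -> set 'rV[R]_d) :
  polar (\bigcup_(i in D) F i) = \bigcap_(i in D) polar (F i).
Proof.
apply/seteqP; split=> [h hF i Di a Fa | h hF a [i Di Fa]]; first by apply: hF; exists i.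
exact: hF i Di a Fa.
Qed.

Lemma polar_scale (k : R) A : polar [set k *: x | x in A] = [set h | polar A (k *: h)].
Proof.
apply/seteqP; split=> h hA => [a Aa | _ [a Aa <-]].
  by rewrite dotvZl -dotvZr; apply: hA; exists a.
by rewrite dotvZr -dotvZl; exact: hA.
Qed.

End ConvexPolar.

Section Polytope.
Variable R : realType.

Lemma normr_rV_le n (x : 'rV[R]_n) (b : R) :
  0 <= b -> (forall i, `|x ord0 i| <= b) -> `|x| <= b.
Proof.
move=> b0 xb; have -> : `|x| = mx_norm x by [].
by rewrite mx_normrE; apply: bigmax_le => // [[i j]] _ /=; rewrite ord1.
Qed.

Lemma bounded_set_le n (A : set 'rV[R]_n) (b : R) :
  (forall x, A x -> `|x| <= b) -> bounded_set A.
Proof.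
move=> Ab; exists b; split; first exact: num_real.
by move=> M bM x Ax; apply: le_trans (Ab x Ax) (ltW bM).
Qed.

Lemma rV_neq0_dim_gt0 n (v : 'rV[R]_n) : v != 0 -> (0 < n)%N.
Proof. by case: n v => // v; rewrite thinmx0 eqxx. Qed.

Definition simplex n : set 'rV[R]_n :=
  [set l | (forall j, 0 <= l ord0 j) /\ \sum_j l ord0 j = 1].
Arguments simplex n : clear implicits.

Lemma compact_simplex n : compact (simplex n).
Proof.
apply: bounded_closed_compact.
  apply: (@bounded_set_le _ _ 1) => l [l_ge0 l1]; apply: normr_rV_le => // i.
  by rewrite ger0_norm // -l1 (bigD1 i) //= lerDl sumr_ge0.
rewrite (_ : simplex n = \bigcap_(j in setT) [set l | 0 <= l ord0 j] `&`
                         (fun l => \sum_j l ord0 j) @^-1` [set 1]).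
  apply: closedI.
    apply: closed_bigI => j _; apply: (@preimage_closed _ _ (fun l : 'rV[R]_n => l ord0 j)
      [set r | 0 <= r]); last exact: closed_ge.
    by move=> l _; exact: coord_continuous.
  apply: preimage_closed; last exact: closed_eq.
  move=> l _; apply: (continuous_big (P := xpredT)); first exact: add_continuous.
  by move=> j _; exact: coord_continuous.
apply/seteqP; split=> l [l_ge0 l1]; split=> // j; last exact: l_ge0.
by move=> _; exact: l_ge0.
Qed.

Variable d : nat.
Implicit Types (C : set 'rV[R]_d) (s : seq 'rV[R]_d) (a h p y : 'rV[R]_d).

Definition polytope s : set 'rV[R]_d :=
  [set \sum_(j < size s) l ord0 j *: s`_j | l in simplex (size s)].

Lemma polytope_sub C s : convex_setv C -> (forall a, a \in s -> C a) -> polytope s `<=` C.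
Proof.
move=> Cc sC _ [l [l_ge0 l1] <-]; apply: convex_setv_comb => // j.
by apply: sC; exact: mem_nth.
Qed.

Lemma mem_polytope s a : a \in s -> polytope s a.
Proof.
move=> sa; have j_lt : (index a s < size s)%N by rewrite index_mem.
pose j := Ordinal j_lt; exists (delta_mx ord0 j).
  split=> [k|]; first by rewrite mxE ler0n.
  rewrite (bigD1 j) //= mxE !eqxx big1 ?addr0 // => k /negbTE kj.
  by rewrite mxE kj.
rewrite (bigD1 j) //= mxE !eqxx scale1r nth_index // big1 ?addr0 // => k /negbTE kj.
by rewrite mxE kj scale0r.
Qed.

Lemma convex_polytope s : convex_setv (polytope s).
Proof.
move=> _ _ t [l1 [l1_ge0 l1_1] <-] [l2 [l2_ge0 l2_1] <-] t0 t1.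
exists (t *: l1 + (1 - t) *: l2).
  split=> [j|]; first by rewrite !mxE addr_ge0 // mulr_ge0 // subr_ge0.
  under eq_bigr do rewrite !mxE.
  by rewrite big_split -!mulr_sumr /= l1_1 l2_1 !mulr1 addrC subrK.
rewrite !scaler_sumr -big_split; apply: eq_bigr => j _.
by rewrite !mxE !scalerA [LHS]scalerDl.
Qed.

Lemma compact_polytope s : compact (polytope s).
Proof.
apply: continuous_compact; last exact: compact_simplex.
apply: continuous_subspaceT => l; apply: (continuous_big (P := xpredT)).
  exact: add_continuous.
by move=> j _ l'; apply: continuousZr_tmp; exact: coord_continuous.
Qed.

Lemma ge0_of_affine_ge0 (b c : R) :
  0 <= c -> (forall t, 0 < t -> t <= 1 -> 0 <= b + t * c) -> 0 <= b.
Proof.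
move=> c_ge0 bc; rewrite leNgt; apply/negP => b_lt0.
pose t := - b / (c - b).
have t_gt0 : 0 < t by rewrite divr_gt0 ?oppr_gt0 //; lra.
have t_le1 : t <= 1 by rewrite ler_pdivrMr ?mul1r; lra.
have tcb : t * (c - b) = - b by rewrite divfK //; apply/negP => /eqP; lra.
have := bc t t_gt0 t_le1; nra.
Qed.

Lemma nearest_point_separates C y p : convex_setv C -> C p ->
    (forall q, C q -> dotv (p - y) (p - y) <= dotv (q - y) (q - y)) ->
  forall a, C a -> dotv (p - y) y + dotv (p - y) (p - y) <= dotv (p - y) a.
Proof.
move=> Cc Cp p_min a Ca; set h := p - y.
have : 0 <= 2 * dotv h (a - p).
  apply: (ge0_of_affine_ge0 (dotvv_ge0 (a - p))) => t t_gt0 t_le1.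
  have := p_min _ (Cc _ _ _ Ca Cp (ltW t_gt0) t_le1).
  rewrite (_ : t *: a + (1 - t) *: p - y = h + t *: (a - p)); last first.
    by apply/rowP => k; rewrite !mxE; ring.
  by rewrite dotv_expand lerDl pmulr_rge0.
have hp : dotv h p = dotv h h + dotv h y by rewrite -dotvDr /h subrK.
rewrite dotvBr hp; lra.
Qed.

Lemma separate_compact_convex C y : C !=set0 -> compact C -> convex_setv C -> ~ C y ->
  exists2 h, h != 0 & forall a, C a -> dotv h y + dotv h h <= dotv h a.
Proof.
move=> C0 Ccpt Cc Cy.
have dist_cont : continuous (fun q : 'rV[R]_d => dotv (q - y) (q - y)).
  by apply: dotv_continuous => q; apply: (@continuousB _ _ _ id (cst y)) => //;
    exact: cst_continuous.
have [p /set_mem Cp p_min] := EVT_min_rV C0 Ccpt (continuous_subspaceT dist_cont).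
exists (p - y); first by rewrite subr_eq0; apply/eqP => py; apply: Cy; rewrite -py.
by apply: nearest_point_separates => // q Cq; exact/p_min/mem_set.
Qed.

End Polytope.

Section Supporting.
Variables (R : realType) (d : nat).
Implicit Types (A C G : set 'rV[R]_d) (F s : seq 'rV[R]_d) (h x y : 'rV[R]_d).

Lemma polytope_subset F0 F : {subset F0 <= F} -> polytope F0 `<=` polytope F.
Proof.
move=> F0F; apply: polytope_sub; first exact: convex_polytope.
by move=> a /F0F; exact: mem_polytope.
Qed.

Lemma halfspace_ball_le (rho c : R) h : 0 < rho ->
  (forall x, `|x| < rho -> c <= dotv h x) -> c <= - (rho / 2) * `|h|.
Proof.
move=> rho_gt0 hc; have [->|h0] := eqVneq h 0.
  by rewrite normr0 mulr0; have := hc 0; rewrite normr0 dotv0r; apply.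
have nh_gt0 : 0 < `|h| by rewrite normr_gt0.
pose z := (- (rho / 2) / `|h|) *: h.
have z_lt : `|z| < rho.
  rewrite normrZ normrM normrN normrV ?unitfE ?normr_eq0 // normr_id.
  rewrite -mulrA mulVf ?gt_eqF // mulr1 ger0_norm; last by rewrite divr_ge0 // ltW.
  lra.
apply: le_trans (hc z z_lt) _; rewrite dotvZr !mulNr lerN2.
have -> : rho / 2 * `|h| = rho / 2 / `|h| * `|h| ^+ 2.
  by rewrite expr2 mulrA divfK // normr_eq0.
by rewrite ler_wpM2l ?sqr_norm_le_dotvv // !divr_ge0 // ltW.
Qed.

Lemma polar_normr_le A (rho : R) h : 0 < rho ->
  (forall x, `|x| < rho -> A x) -> polar A h -> `|h| <= 2 / rho.
Proof.
move=> rho_gt0 ballA hA.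
have := halfspace_ball_le rho_gt0 (fun x xr => hA x (ballA x xr)).
by rewrite ler_pdivlMr // mulrC; nra.
Qed.

Lemma compact_polar A (rho : R) : 0 < rho ->
  (forall x, `|x| < rho -> A x) -> compact (polar A).
Proof.
move=> rho_gt0 ballA; apply: bounded_closed_compact; last exact: closed_polar.
by apply: (@bounded_set_le _ _ _ (2 / rho)) => h; exact: polar_normr_le.
Qed.

Lemma interior_dilate G (rho s : R) y : convex_setv G -> 0 < rho ->
  (forall x, `|x| < rho -> G x) -> 1 < s -> G (s *: y) -> interior G y.
Proof.
move=> Gc rho_gt0 ballG s_gt1 Gsy; apply/nbhs_ballP.
have s_gt0 : 0 < s by lra.
exists (rho * (s - 1) / s); first by rewrite /= divr_gt0 // mulr_gt0 // subr_gt0.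
move=> z; rewrite -ball_normE /= distrC => yz.
pose w := (s / (s - 1)) *: (z - y).
have Gw : G w.
  apply: ballG; rewrite normrZ ger0_norm ?divr_ge0 ?subr_ge0 ?ltW //.
  move: yz; rewrite ltr_pdivlMr // mulrAC ltr_pdivrMr ?subr_gt0 //.
  by rewrite [_ * s]mulrC.
have si_ge0 : 0 <= s^-1 by rewrite invr_ge0 ltW.
have si_le1 : s^-1 <= 1 by rewrite invf_le1 // ltW.
have := Gc _ _ _ Gsy Gw si_ge0 si_le1.
congr G; apply/rowP => k; rewrite /w !mxE; field; lra.
Qed.

Lemma normr_delta_mx (j : 'I_d) : `|delta_mx ord0 j : 'rV[R]_d| = 1.
Proof.
apply/eqP; rewrite eq_le; apply/andP; split.
  by apply: normr_rV_le => // i; rewrite mxE; case: (i == j); rewrite ?normr1 ?normr0.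
by have := normr_coord_le (delta_mx ord0 j : 'rV[R]_d) j; rewrite mxE !eqxx normr1.
Qed.

Lemma finite_negative_cover A : (0 < d)%N ->
    (forall h, h != 0 -> exists2 a, A a & dotv h a < 0) ->
  exists F0 (r : R), [/\ F0 != [::], (forall a, a \in F0 -> A a), 0 < r &
    forall h, `|h| = 1 -> exists2 a, a \in F0 & dotv h a < - r].
Proof.
move=> d_gt0 A_neg.
have S_compact : compact [set h : 'rV[R]_d | `|h| = 1].
  apply: bounded_closed_compact; first by apply: (@bounded_set_le _ _ _ 1) => h ->.
  apply: (@preimage_closed _ _ (fun h : 'rV[R]_d => `|h|) [set r | r = 1]).
    by move=> h _; exact: norm_continuous.
  exact: closed_eq.
move: S_compact; rewrite compact_cover => /(_ _ [set p : 'rV[R]_d * nat | A p.1]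
  (fun p => [set h | dotv h p.1 < - p.2.+1%:R^-1])) [].
- move=> p _; apply: (@open_comp _ _ (dotv^~ p.1) [set r | r < - p.2.+1%:R^-1]).
    by move=> h _; exact: dotv_continuousl.
  exact: open_lt.
- move=> h /= h1; have h_neq0 : h != 0 by rewrite -normr_eq0 h1 oner_neq0.
  have [a Aa ha] := A_neg h h_neq0.
  have e_gt0 : 0 < - dotv h a by rewrite oppr_gt0.
  exists (a, Num.truncn (- dotv h a)^-1) => //=.
  rewrite ltrNr -[X in _ < X]invrK ltf_pV2 ?posrE ?invr_gt0 ?ltr0Sn //.
  exact: truncnS_gt.
move=> D' D'A cov; pose F0 := [seq p.1 | p <- finmap.enum_fset D'].
pose k := \max_(p <- finmap.enum_fset D') p.2.
exists F0, k.+1%:R^-1; split.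
- have [p pD' _] := cov _ (normr_delta_mx (Ordinal d_gt0)).
  by apply/eqP => F0_nil; have := map_f (fun p => p.1) pD'; rewrite -/F0 F0_nil.
- by move=> a /mapP [p pD' ->]; have := D'A p pD'; rewrite inE.
- by rewrite invr_gt0 ltr0Sn.
- move=> h /cov [p pD' hp]; exists p.1; first exact: map_f.
  apply: lt_le_trans hp _; rewrite lerN2 lef_pV2 ?posrE ?ltr0Sn // ler_nat ltnS.
  exact: (leq_bigmax_seq (F := fun p : 'rV[R]_d * nat => p.2)).
Qed.

Lemma ball_in_polytope A : (0 < d)%N ->
    (forall h, h != 0 -> exists2 a, A a & dotv h a < 0) ->
  exists F0 (rho : R), [/\ (forall a, a \in F0 -> A a), 0 < rho &
    forall y, `|y| < rho -> polytope F0 y].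
Proof.
move=> d_gt0 A_neg.
have [F0 [r [F0_neq0 F0A r_gt0 F0_neg]]] := finite_negative_cover d_gt0 A_neg.
have dR_gt0 : 0 < d%:R :> R by rewrite ltr0n.
exists F0, (r / d%:R); split => // [|y y_lt]; first by rewrite divr_gt0.
apply: contrapT.
move=> /(separate_compact_convex _ (@compact_polytope _ _ F0) (@convex_polytope _ _ F0)).
case=> [|h h_neq0 h_sep].
  by case: F0 F0_neq0 {F0A F0_neg} => // a s _; exists a; apply: mem_polytope; exact: mem_head.
have nh_gt0 : 0 < `|h| by rewrite normr_gt0.
have unit_h : `| `|h|^-1 *: h| = 1 by apply: normrZV; rewrite unitfE normr_eq0.
have [a aF0 ha] := F0_neg _ unit_h.
have hy_lt_ha : `|h|^-1 * dotv h y < `|h|^-1 * dotv h a.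
  rewrite ltr_pM2l ?invr_gt0 //.
  by have := h_sep a (mem_polytope aF0); have := dotvv_gt0 h_neq0; lra.
have := normr_dotv_le (`|h|^-1 *: h) y; rewrite unit_h mulr1 ler_norml => /andP [hy _].
have : d%:R * `|y| < r by rewrite mulrC -ltr_pdivlMr.
move: ha hy; rewrite !dotvZl; lra.
Qed.

Lemma polar_separates_point C (rho : R) y : compact C -> convex_setv C -> 0 < rho ->
  (forall x, `|x| < rho -> C x) -> ~ C y -> exists2 h, polar C h & dotv h y < -1.
Proof.
move=> Ccpt Cc rho_gt0 ballC /(separate_compact_convex _ Ccpt Cc) [].
  by exists 0; apply: ballC; rewrite normr0.
move=> h h_neq0 h_sep; set c0 := dotv h y + dotv h h in h_sep.
have c0_lt0 : c0 < 0.
  have := halfspace_ball_le rho_gt0 (fun x xr => h_sep x (ballC x xr)).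
  have : 0 < `|h| by rewrite normr_gt0.
  nra.
exists ((- c0)^-1 *: h) => [a Ca|]; rewrite dotvZl.
  by rewrite ler_pdivlMl ?oppr_gt0 //; have := h_sep a Ca; lra.
rewrite ltr_pdivrMl ?oppr_gt0 //.
by have := dotvv_gt0 h_neq0; rewrite /c0 in c0_lt0 *; lra.
Qed.

(* Each [h] of the compact set [{h in polar (polytope F0) | <h, y> <= -1}] is cut off by some
   point of [A]; adding finitely many such points to [F0] leaves no polar element of the
   polytope below [-1] at [y], so [y] lies in it by [polar_separates_point]. *)
Lemma polytope_of_polar_gt A F0 (rho : R) y : 0 < rho -> (forall a, a \in F0 -> A a) ->
    (forall x, `|x| < rho -> polytope F0 x) -> (forall h, polar A h -> -1 < dotv h y) ->
  exists2 F, (forall a, a \in F -> A a) & polytope F y.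
Proof.
move=> rho_gt0 F0A ballF0 yA.
pose Z := polar (polytope F0) `&` [set h | dotv h y <= -1].
have Z_compact : compact Z.
  apply: (subclosed_compact _ (compact_polar rho_gt0 ballF0)); last by move=> h [].
  apply: closedI; first exact: closed_polar.
  apply: (@preimage_closed _ _ (dotv^~ y) [set r | r <= -1]); last exact: closed_le.
  by move=> h _; exact: dotv_continuousl.
move: Z_compact; rewrite compact_cover => /(_ _ A (fun a => [set h | dotv h a < -1])) [].
- move=> a _; apply: (@open_comp _ _ (dotv^~ a) [set r | r < -1]); last exact: open_lt.
  by move=> h _; exact: dotv_continuousl.
- move=> h [_ /= hy]; apply: contrapT => h_uncovered.
  suff /yA : polar A h by rewrite ltNge hy.
  by move=> a Aa; rewrite leNgt; apply/negP => ha; apply: h_uncovered; exists a.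
move=> D' D'A cov; pose F := F0 ++ finmap.enum_fset D'.
have FA a : a \in F -> A a.
  by rewrite mem_cat => /orP [/F0A //|aD']; have := D'A a aD'; rewrite inE.
have F0F : polytope F0 `<=` polytope F by apply: polytope_subset => a aF0; rewrite mem_cat aF0.
exists F => //; apply: contrapT.
have ballF x : `|x| < rho -> polytope F x by move=> /ballF0 /F0F.
have F_sep := polar_separates_point (@compact_polytope _ _ F) (@convex_polytope _ _ F).
move=> /(F_sep _ _ rho_gt0 ballF) [h hF hy].
have [a aD' /= ha] := cov h (conj (polarS F0F hF) (ltW hy)).
have aF : a \in F by rewrite mem_cat aD' orbT.
by have := hF a (mem_polytope aF); lra.
Qed.

Lemma polar_supports_noninterior G y : (0 < d)%N -> convex_setv G ->
    (forall h, h != 0 -> exists2 a, G a & dotv h a < 0) -> ~ interior G y ->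
  exists2 h, polar G h & dotv h y <= -1.
Proof.
move=> d_gt0 Gc G_neg y_bd.
have [F0 [rho [F0G rho_gt0 ballF0]]] := ball_in_polytope d_gt0 G_neg.
have ballG x : `|x| < rho -> G x by move=> /ballF0; exact: polytope_sub.
have polar0 : polar G 0 by move=> a _; rewrite dotv0l lerN10.
have [h0 /set_mem h0G h0_min] := EVT_min_rV (ex_intro _ 0 polar0)
  (compact_polar rho_gt0 ballG) (continuous_subspaceT (@dotv_continuousl R d y)).
exists h0 => //; rewrite leNgt; apply/negP => m_gt; apply: y_bd.
have m_le0 : dotv h0 y <= 0 by rewrite -(dotv0l y); exact/h0_min/mem_set.
pose s := 2 / (1 - dotv h0 y).
have s_gt1 : 1 < s by rewrite /s ltr_pdivlMr ?subr_gt0; lra.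
have sy_gt h : polar G h -> -1 < dotv h (s *: y).
  move=> hG; rewrite dotvZr; apply: lt_le_trans (_ : -1 < s * dotv h0 y) _.
    by rewrite /s mulrAC ltr_pdivlMr ?subr_gt0; lra.
  by rewrite ler_pM2l ?(lt_trans ltr01 s_gt1) //; exact/h0_min/mem_set.
have [F FG Fsy] := polytope_of_polar_gt rho_gt0 F0G ballF0 sy_gt.
exact: interior_dilate Gc rho_gt0 ballG s_gt1 (polytope_sub Gc FG Fsy).
Qed.

End Supporting.

Section LinearOverPolar.
Variables (R : realType) (d : nat).
Implicit Types (G : set 'rV[R]_d) (E h y : 'rV[R]_d).

Lemma polar_convhull_scaled (K : Type) (k : K -> R) (S : K -> set 'rV[R]_d) :
  polar (convhull (\bigcup_(i in setT) [set k i *: x | x in closure (S i)])) =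
  [set h | forall i, polar (S i) (k i *: h)].
Proof.
rewrite polar_convhull polar_bigcup; apply/seteqP; split=> h /= hS i.
  by have := hS i I; rewrite polar_scale /= polar_closure.
by move=> _; rewrite polar_scale /= polar_closure; exact: hS.
Qed.

Lemma polar_ge_closure G h y : polar G h -> closure G y -> -1 <= dotv h y.
Proof. by rewrite -polar_closure; exact. Qed.

Lemma polar_supporting G h y : polar G h -> closure G y -> dotv h y <= -1 ->
  (forall x, G x -> dotv h y <= dotv h x) /\ dotv h y = -1.
Proof.
move=> hG Gy hy; have hy1 : dotv h y = -1.
  by apply/eqP; rewrite eq_le hy; exact: polar_ge_closure Gy.
by split=> // x Gx; rewrite hy1; exact: hG.
Qed.

Lemma argmax_over_polar G E y (t : R) : 0 < t -> y = - (t *: E) -> closure G y ->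
    (exists2 h, polar G h & dotv h y <= -1) ->
  [set h | polar G h /\ forall h', polar G h' -> dotv h' E <= dotv h E] =
  [set h | (forall x, G x -> dotv h y <= dotv h x) /\ dotv h y = -1].
Proof.
move=> t_gt0 yE Gy [h0 h0G h0y].
have hyE h : dotv h y = - (t * dotv h E) by rewrite yE dotvNr dotvZr.
apply/seteqP; split=> h /= [hG h_max].
  apply: polar_supporting => //; have := h_max _ h0G.
  by move: h0y; rewrite !hyE; nra.
have hG' : polar G h by move=> x Gx; rewrite -h_max; exact: hG.
split=> // h' h'G; have := polar_ge_closure h'G Gy.
by move: h_max; rewrite !hyE; nra.
Qed.

Lemma dotv_eq_enorm_ratio h E y (t : R) : 0 < t -> E != 0 -> y = - (t *: E) ->
  dotv h y = -1 -> dotv h E = enorm E / enorm y.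
Proof.
move=> t_gt0 E_neq0 yE; rewrite yE dotvNr dotvZr => hE.
have enormE_gt0 : 0 < enorm E by rewrite sqrtr_gt0 dotvv_gt0.
have -> : enorm (- (t *: E)) = t * enorm E.
  rewrite /enorm dotvNr dotvC dotvNr opprK dotvZl dotvZr mulrA -expr2.
  by rewrite sqrtrM ?sqr_ge0 // sqrtr_sqr ger0_norm // ltW.
rewrite [t * _]mulrC invfM mulrA divff ?gt_eqF // mul1r.
apply: (mulfI (lt0r_neq0 t_gt0)); rewrite mulfV ?gt_eqF //; lra.
Qed.

End LinearOverPolar.

Section Expectation.
Context {dT : measure_display} {T : measurableType dT} {R : realType}.
Implicit Types (Q : probability T R) (f : T -> R).
Local Open Scope ereal_scope.

Lemma EQ_funeposneg Q f :
  EQ Q f = \int[Q]_x (EFin \o f)^\+ x - \int[Q]_x (EFin \o f)^\- x.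
Proof.
rewrite /EQ; congr (_ - _); apply: eq_integral => x _.
  by rewrite funeposE /= EFin_max.
by rewrite funenegE /= EFin_max EFinN.
Qed.

Lemma EQN_funeposneg Q f :
  EQ Q (fun x => - f x)%R = \int[Q]_x (EFin \o f)^\- x - \int[Q]_x (EFin \o f)^\+ x.
Proof.
rewrite /EQ; congr (_ - _); apply: eq_integral => x _.
  by rewrite funenegE /= EFin_max EFinN.
by rewrite funeposE /= opprK EFin_max.
Qed.

Lemma EQ_integral Q f : EQ Q f = \int[Q]_x (f x)%:E.
Proof. by rewrite EQ_funeposneg [RHS]integralE. Qed.

Lemma ltey_of_sube_gtNy (a b : \bar R) : -oo < a - b -> b < +oo.
Proof. by case: b => [r| |] //=; rewrite ?ltry // addeNy ltxx. Qed.

(* [E_Q f] and [E_Q (-f)] are both [> -oo] exactly when neither part of [f] has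
   infinite integral, because of the convention [+oo - +oo = -oo]. *)
Lemma integrable_EQ_gtNy Q f : measurable_fun setT f ->
  -oo < EQ Q f -> -oo < EQ Q (fun x => - f x)%R -> Q.-integrable setT (EFin \o f).
Proof.
move=> mf; rewrite EQN_funeposneg EQ_funeposneg => /ltey_of_sube_gtNy neg_fin.
move=> /ltey_of_sube_gtNy pos_fin.
have mEf : measurable_fun [set: T] (EFin \o f) by exact/measurable_EFinP.
apply/integrableP; split=> //; rewrite -/(abse \o (EFin \o f)) fune_abse.
rewrite ge0_integralD //; first exact: lte_add_pinfty.
  exact: measurable_funepos.
exact: measurable_funeneg.
Qed.

Lemma EQ_pairRV Q d (h : 'rV[R]_d) (X : 'I_d -> T -> R) :
    (forall i, Q.-integrable setT (EFin \o X i)) ->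
  EQ Q (pairRV h X) = (dotv h (EQv Q X))%:E.
Proof.
move=> Xint; rewrite EQ_integral /pairRV /dotv -sumEFin.
under eq_integral do rewrite -sumEFin.
rewrite integral_sum //; last first.
  move=> i; rewrite (_ : (fun x => _) = (fun x => (h ord0 i)%:E * (EFin \o X i) x)).
    exact: integrableZl.
  by apply: funext => x; rewrite EFinM.
apply: eq_bigr => i _; under eq_integral do rewrite EFinM.
rewrite integralZl //; last exact: Xint.
rewrite /EQv mxE EQ_integral EFinM fineK //.
exact: (integrable_fin_num measurableT (Xint i)).
Qed.

Lemma L0_pairRV d (h : 'rV[R]_d) (X : 'I_d -> T -> R) :
  (forall i, L0 (X i)) -> L0 (pairRV h X).
Proof. by move=> LX; apply: measurable_sum => i; apply: measurable_funM => //; exact: LX. Qed.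

Lemma coherent_utilityE (P : probability T R) u Y : coherent_utility P u -> L0 Y ->
  u Y = ereal_inf [set EQ Q Y | Q in determining_set P u].
Proof.
move=> [D [_ [DP uE]]] LY; apply/eqP; rewrite eq_le; apply/andP; split.
  by apply/ereal_infP => _ [Q [_ Qu] <-]; exact: Qu.
rewrite uE //; apply: ereal_inf_le_tmp => _ [Q DQ <-]; exists Q => //.
split=> [|Z LZ]; first exact: DP.
by rewrite uE //; apply: ereal_inf_lbound; exists Q.
Qed.

Lemma determining_set_integrable (P : probability T R) u Y Q :
  L1w u Y -> determining_set P u Q -> Q.-integrable setT (EFin \o Y).
Proof.
move=> [LY [uY uNY]] [_ Qu]; apply: (integrable_EQ_gtNy LY).
  exact: lt_le_trans uY (Qu _ LY).
by apply: lt_le_trans uNY (Qu _ _); exact: measurable_funN.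
Qed.

End Expectation.

Section CoherentUtilities.
Context {dT : measure_display} {T : measurableType dT} {R : realType}.
Variables (P : probability T R) (M d : nat) (u : 'I_M -> (T -> R) -> \bar R).
Hypothesis Hu : forall m, coherent_utility P (u m).
Variable X : 'I_d -> T -> R.
Hypothesis HX : forall i m, L1w (u m) (X i).

Definition mean_set m : set 'rV[R]_d := [set EQv Q X | Q in determining_set P (u m)].

Lemma utility_pairRV m h :
  u m (pairRV h X) = ereal_inf [set (dotv h x)%:E | x in mean_set m].
Proof.
rewrite (coherent_utilityE (Hu m)); last by apply: L0_pairRV => i; have [] := HX i m.
have EQ_h Q : determining_set P (u m) Q -> EQ Q (pairRV h X) = (dotv h (EQv Q X))%:E.
  by move=> DQ; apply: EQ_pairRV => i; exact: determining_set_integrable (HX i m) DQ.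
congr ereal_inf; apply/seteqP; split=> [_ [Q DQ <-]|_ [_ [Q DQ <-] <-]].
  by rewrite EQ_h //; exists (EQv Q X) => //; exists Q.
by exists Q => //; rewrite EQ_h.
Qed.

Lemma feasible_polar m h (c : R) : 0 < c ->
  (- u m (pairRV h X) <= c%:E)%E <-> polar (mean_set m) (c^-1 *: h).
Proof.
move=> c_gt0; rewrite leeNl -EFinN utility_pairRV; split.
  move=> /ereal_infP c_le x mx; rewrite dotvZl ler_pdivlMl // mulrN1 -lee_fin.
  by apply: c_le; exists x.
move=> hc; apply/ereal_infP => _ [x mx <-].
by rewrite lee_fin -mulrN1 -ler_pdivlMl // -dotvZl; exact: hc.
Qed.

Lemma utility_lt0 m h : (u m (pairRV h X) < 0)%E -> exists2 x, mean_set m x & dotv h x < 0.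
Proof.
by rewrite utility_pairRV => /ereal_inf_lt [_ [x mx <-]]; rewrite lte_fin; exists x.
Qed.

Variable c : 'I_M -> R.
Hypothesis Hc : forall m, 0 < c m.

Let G := convhull (\bigcup_(m in setT) [set (c m)^-1 *: x | x in closure (mean_set m)]).

Lemma feasible_eq_polar :
  [set h | forall m, (- u m (pairRV h X) <= (c m)%:E)%E] = polar G.
Proof.
rewrite polar_convhull_scaled; apply/seteqP; split=> h /= hm m.
  by apply/feasible_polar; [exact: Hc | exact: hm].
by apply/(feasible_polar _ _ (Hc m)); exact: hm.
Qed.

Lemma utility_lt0_convhull (m0 : 'I_M) :
    (forall h m, h != 0 -> (u m (pairRV h X) < 0)%E) ->
  forall h, h != 0 -> exists2 a, G a & dotv h a < 0.
Proof.
move=> u_lt0 h h_neq0; have [x mx hx] := utility_lt0 (u_lt0 h m0 h_neq0).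
exists ((c m0)^-1 *: x); last by rewrite dotvZr pmulr_rlt0 // invr_gt0.
by apply: subset_convhull; exists m0 => //; exists x => //; exact: subset_closure.
Qed.

End CoherentUtilities.

Theorem theorem4p1 (dT : measure_display) (T : measurableType dT) (R : realType)
  (P : probability T R) (M d : nat)
  (u : 'I_M -> (T -> R) -> \bar R)
  (Hu : forall m, coherent_utility P (u m))
  (X : 'I_d -> T -> R)
  (HX : forall i m, L1w (u m) (X i))
  (Hneg : forall (h : 'rV[R]_d) m, h != 0 -> (u m (pairRV h X) < 0)%E)
  (E : 'rV[R]_d) (HE : E != 0)
  (c : 'I_M -> R) (Hc : forall m, 0 < c m)
  (Tp : 'rV[R]_d) :
  let D m := determining_set P (u m) in
  let Gm m := closure [set EQv Q X | Q in D m] in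
  let G := convhull (\bigcup_(m in setT) [set (c m)^-1 *: x | x in Gm m]) in
  (closure G `\` interior G) Tp ->
  (exists t : R, 0 < t /\ Tp = - (t *: E)) ->
  let N := [set h : 'rV[R]_d | forall x, G x -> dotv h Tp <= dotv h x] in
  let feasible := [set h : 'rV[R]_d |
                    forall m, (- u m (pairRV h X) <= (c m)%:E)%E] in
  let solutions := [set h | feasible h /\
                    forall h', feasible h' -> dotv h' E <= dotv h E] in
  solutions = [set h | N h /\ dotv h Tp = -1] /\
  solutions !=set0 /\
  (forall h, solutions h -> dotv h E = enorm E / enorm Tp).
Proof.
move=> D Gm G [TG T_bd] [t [t_gt0 TE]] N feasible solutions.
have [m0 _] : [set: 'I_M] !=set0.
  have /convhull_neq0 [_ [m0 _ _]] : G !=set0.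
    by apply/set0P/negP => /eqP G0; move: TG; rewrite G0 closure0.
  by exists m0.
have G_neg := utility_lt0_convhull Hu HX Hc m0 Hneg.
have [h0 h0G h0T] := polar_supports_noninterior (rV_neq0_dim_gt0 HE)
  (@convex_convhull _ _ _) G_neg T_bd.
have solE : solutions = [set h | N h /\ dotv h Tp = -1].
  rewrite /solutions (_ : feasible = polar G); last exact: feasible_eq_polar.
  by apply: argmax_over_polar t_gt0 TE TG _; exists h0.
split=> //; split; first by exists h0; rewrite solE; exact: polar_supporting.
by move=> h; rewrite solE => -[_]; exact: dotv_eq_enorm_ratio t_gt0 HE TE.
Qed.
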